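(* Let $A\in\mathcal{PM}(n)$ be a poset matrix with row vectors $r_0,\ldots,r_{n-1}$. Then the Boolean row space $\mathsf{Row}_{\mathbb B}(A)=\{\sum_{i\in S} r_i : S\subseteq X_n\}$ (Boolean sums, the empty sum being $\mathbf 0$) equals the set $\mathsf{PV}_n(A)$ of poset vectors of $A$.
   Context: Let $X_n=\{0,1,\ldots,n-1\}$. A naturally labeled (NL) poset on $X_n$ is a partial order $\preceq$ on $X_n$ such that $x\preceq y$ implies $x\le y$ in the usual integer order. Its poset matrix is the $n\times n$ $(0,1)$-matrix $A=(a_{i,j})_{i,j\in X_n}$ with $a_{i,j}=1$ if $j\preceq i$ and $0$ otherwise; $\mathcal{PM}(n)$ is the set of all such matrices. Arithmetic is in the Boolean algebra $\{0,1\}$ ($1+1=1$). For $v\in\{0,1\}^n$ (a row vector), $A^v=\begin{bmatrix}A&\mathbf{0}\\ v&1\end{bmatrix}$, and $v$ is a poset vector of $A$ if $A^v\in\mathcal{PM}(n+1)$; $\mathsf{PV}_n(A)$ is the set of poset vectors of $A$. *)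

From mathcomp Require Import all_boot all_order all_algebra.
Set Implicit Arguments. Unset Strict Implicit. Unset Printing Implicit Defensive.

(* Boolean (0,1)-matrices are represented as 'M[bool]_n; entry true = 1.
   Index i : 'I_n stands for element i of X_n = {0,...,n-1}. *)

(* a_{i,j} = 1 iff j ⪯ i.  A is a poset matrix iff the relation
   j ⪯ i :<-> A i j is a partial order which is naturally labeled. *)
Definition is_poset_matrix (n : nat) (A : 'M[bool]_n) : bool :=
  [&& [forall i, A i i],
      [forall i, forall j, (A i j && A j i) ==> (i == j)],
      [forall i, forall j, forall k, (A i j && A j k) ==> A i k]
    & [forall i, forall j, A i j ==> (j <= i)%N]].

Definition ext_mx (n : nat) (A : 'M[bool]_n) (v : 'rV[bool]_n) : 'M[bool]_(n + 1) :=
  block_mx A (const_mx false) v (const_mx true).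

Definition poset_vector (n : nat) (A : 'M[bool]_n) (v : 'rV[bool]_n) : bool :=
  is_poset_matrix (ext_mx A v).

Definition bool_row_sum (n : nat) (A : 'M[bool]_n) (S : {set 'I_n}) : 'rV[bool]_n :=
  \row_j [exists i in S, A i j].

Definition in_bool_row_space (n : nat) (A : 'M[bool]_n) (v : 'rV[bool]_n) : Prop :=
  exists S : {set 'I_n}, v = bool_row_sum A S.

From mathcomp Require Import all_boot all_order all_algebra.

Set Implicit Arguments.
Unset Strict Implicit.
Unset Printing Implicit Defensive.

(* A row vector v is a poset vector of A exactly when its support is a down-set
   of the order j ⪯ i :<-> A i j: the new maximal element n sits above precisely
   the elements marked by v, and transitivity through n forces downward closure.
   Down-sets are the unions of principal down-sets, i.e. the Boolean sums of
   rows of A; reflexivity puts every element of the support into the union and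
   transitivity keeps the union inside the support. *)

Lemma is_poset_matrixP (n : nat) (A : 'M[bool]_n) :
  reflect [/\ forall i, A i i,
              forall i j, A i j -> A j i -> i = j,
              forall i j k, A i j -> A j k -> A i k
            & forall i j, A i j -> (j <= i)%N]
          (is_poset_matrix A).
Proof.
apply: (iffP and4P) => [[/forallP refl /forallP anti /forallP trans /forallP lab]|].
  split=> [//|i j Aij Aji|i j k Aij Ajk|i j Aij].
  - by apply/eqP; move/forallP/(_ j): (anti i); rewrite Aij Aji.
  - by move/forallP/(_ j)/forallP/(_ k): (trans i); rewrite Aij Ajk.
  - by move/forallP/(_ j): (lab i); rewrite Aij.
move=> [refl anti trans lab]; split; apply/forallP => i.
- exact: refl.
- by apply/forallP => j; apply/implyP => /andP[Aij Aji]; rewrite (anti i j).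
- apply/forallP => j; apply/forallP => k.
  by apply/implyP => /andP[Aij Ajk]; apply: trans Ajk.
- by apply/forallP => j; apply/implyP; apply: lab.
Qed.

Definition down_closed (n : nat) (A : 'M[bool]_n) (v : 'rV[bool]_n) : Prop :=
  forall j k, v ord0 j -> A j k -> v ord0 k.

Section ExtendedMatrix.

Variables (n : nat) (A : 'M[bool]_n) (v : 'rV[bool]_n).

Lemma ext_mx_ul (i j : 'I_n) : ext_mx A v (lshift 1 i) (lshift 1 j) = A i j.
Proof. exact: block_mxEul. Qed.

Lemma ext_mx_ur (i : 'I_n) (k : 'I_1) : ext_mx A v (lshift 1 i) (rshift n k) = false.
Proof. by rewrite /ext_mx block_mxEur mxE. Qed.

Lemma ext_mx_dl (k : 'I_1) (j : 'I_n) : ext_mx A v (rshift n k) (lshift 1 j) = v ord0 j.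
Proof. by rewrite /ext_mx block_mxEdl ord1. Qed.

Lemma ext_mx_dr (k l : 'I_1) : ext_mx A v (rshift n k) (rshift n l) = true.
Proof. by rewrite /ext_mx block_mxEdr mxE. Qed.

Definition ext_mxE := (ext_mx_ul, ext_mx_ur, ext_mx_dl, ext_mx_dr).

Lemma poset_vector_down_closed : poset_vector A v -> down_closed A v.
Proof.
case/is_poset_matrixP=> _ _ trans _ j k vj Ajk.
by move: (trans (rshift n ord0) (lshift 1 j) (lshift 1 k)); rewrite !ext_mxE; apply.
Qed.

Lemma down_closed_poset_vector :
  is_poset_matrix A -> down_closed A v -> poset_vector A v.
Proof.
case/is_poset_matrixP=> refl anti trans lab vdown; apply/is_poset_matrixP.
split=> [i|i j|i j k|i j];
  do ?[case: (split_ordP i) => {}i ->]; do ?[case: (split_ordP j) => {}j ->];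
  do ?[case: (split_ordP k) => {}k ->]; rewrite ?ext_mxE //.
- by move=> Aij Aji; rewrite (anti i j).
- by rewrite !ord1.
- exact: trans.
- exact: vdown.
- exact: lab.
- by move=> _; rewrite /= ltnW // ltn_addr.
- by rewrite !ord1.
Qed.

End ExtendedMatrix.

Section RowSpace.

Variables (n : nat) (A : 'M[bool]_n).

Lemma bool_row_sum_down_closed (S : {set 'I_n}) :
  (forall i j k, A i j -> A j k -> A i k) -> down_closed A (bool_row_sum A S).
Proof.
move=> trans j k; rewrite !mxE => /existsP[i /andP[iS Aij]] Ajk.
by apply/existsP; exists i; rewrite iS (trans i j k).
Qed.

Lemma down_closed_bool_row_sum (v : 'rV[bool]_n) :
  (forall i, A i i) -> down_closed A v -> v = bool_row_sum A [set i | v ord0 i].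
Proof.
move=> refl vdown; apply/rowP => k; rewrite !mxE.
apply/idP/existsP => [vk|[i /andP[]]]; last by rewrite inE; apply: vdown.
by exists k; rewrite inE vk refl.
Qed.

End RowSpace.

Theorem theorem2p4 (n : nat) (A : 'M[bool]_n) :
  is_poset_matrix A ->
  forall v : 'rV[bool]_n, in_bool_row_space A v <-> poset_vector A v.
Proof.
move=> posetA v; have /is_poset_matrixP[refl _ trans _] := posetA.
split=> [[S ->]|pv].
  exact/(down_closed_poset_vector posetA)/bool_row_sum_down_closed.
exists [set i | v ord0 i].
exact/down_closed_bool_row_sum/poset_vector_down_closed.
Qed.
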